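(* Assume the setting of the context. Then there is $\epsilon_0>0$ such that for every $\epsilon\in(0,\epsilon_0)$, every $\sigma\in\Sigma$ and every $x\in[0,\infty)$: if $Q^\epsilon_\sigma\cdot x\geq 0$, then $Q^\epsilon_\sigma\cdot x\geq x$.
   Context: Let $(\Sigma,\mathbf{p})$ be a probability space. For each $\sigma\in\Sigma$ and $\epsilon\in[-1,1]$ let real numbers $a_\sigma,b_\sigma$ and $\alpha^\epsilon_\sigma,\beta^\epsilon_\sigma,\gamma^\epsilon_\sigma,\delta^\epsilon_\sigma$ be given, and write $A^\epsilon_\sigma=\begin{pmatrix}\alpha^\epsilon_\sigma&\beta^\epsilon_\sigma\\ \gamma^\epsilon_\sigma&\delta^\epsilon_\sigma\end{pmatrix}$. Assume that for all $\sigma$: $a_\sigma-|b_\sigma|\ge C_1$ and $\|A^\epsilon_\sigma\|\le C_3$ for $|\epsilon|\le1$, with constants $C_1,C_3\in(0,\infty)$. For $x\in\mathbb{R}\cup\{\infty\}$ define the Möbius action $$Q^\epsilon_\sigma\cdot x=\frac{(1+\epsilon^2\alpha^\epsilon_\sigma)x+(a_\sigma-b_\sigma-\epsilon\beta^\epsilon_\sigma)\epsilon}{1+\epsilon^2\delta^\epsilon_\sigma-(a_\sigma+b_\sigma+\epsilon\gamma^\epsilon_\sigma)\epsilon x},$$ i.e. the action of the matrix $\begin{pmatrix}1+\epsilon^2\alpha&(a-b-\epsilon\beta)\epsilon\\-(a+b+\epsilon\gamma)\epsilon&1+\epsilon^2\delta\end{pmatrix}$ on $\mathbb{R}\cup\{\infty\}$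 (with the usual conventions at $\infty$). The energy parameter $\epsilon$ is taken positive. *)

From Stdlib Require Import Reals.
Open Scope R_scope.

(* Operator (spectral) norm of the 2x2 real matrix [[a, b], [c, d]]:
   sqrt of the largest eigenvalue of A^T A, i.e.
   sqrt((S + sqrt(S^2 - 4 det^2)) / 2) with S = a^2+b^2+c^2+d^2. *)
Definition opnorm2 (a b c d : R) : R :=
  let S := a*a + b*b + c*c + d*d in
  let det := a*d - b*c in
  sqrt ((S + sqrt (S*S - 4*(det*det))) / 2).

(* Entries of the matrix
   [[1 + eps^2 al, (a - b - eps be) eps], [-(a + b + eps ga) eps, 1 + eps^2 de]]
   whose Moebius action on R u {oo} is Q^eps_sigma. For a finite x, the image is
   Qnum / Qden if Qden <> 0, and the point at infinity if Qden = 0. *)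
Definition Qnum (eps a b al be : R) (x : R) : R :=
  (1 + eps^2 * al) * x + (a - b - eps * be) * eps.
Definition Qden (eps a b ga de : R) (x : R) : R :=
  1 + eps^2 * de - (a + b + eps * ga) * eps * x.

(** For small [eps] the matrix of [Q^eps_sigma] is [1 + eps J] with
    [J = [[0, a - b], [-(a + b), 0]]] up to [O(eps^2)], so
    [Qnum - x Qden = eps ((a - b) + (a + b) x^2 + O(eps) x)].  Since
    [a -+ b >= C1], the quadratic in [x] dominates [C1/2 (1 - x)^2 >= 0] once
    the [O(eps)] term is below [C1].  The numerator is then positive, so
    [Q . x >= 0] forces [Qden > 0], and [Qnum >= x Qden] means [Q . x >= x]. *)
From Stdlib Require Import Reals Lra Psatz.
Open Scope R_scope.

Lemma sum_sqr_entries_le_opnorm2 (a b c d : R) :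
  a*a + b*b + c*c + d*d <= 2 * (opnorm2 a b c d * opnorm2 a b c d).
Proof.
  unfold opnorm2.
  set (S := a*a + b*b + c*c + d*d).
  set (T := (S + sqrt (S*S - 4*((a*d - b*c)*(a*d - b*c)))) / 2).
  assert (HT : S / 2 <= T).
  { pose proof (sqrt_pos (S*S - 4*((a*d - b*c)*(a*d - b*c)))). unfold T; lra. }
  assert (HS : 0 <= S) by (unfold S; nra).
  rewrite sqrt_sqrt; lra.
Qed.

Lemma Rabs_entries_le_opnorm2 (a b c d C : R) :
  opnorm2 a b c d <= C ->
  Rabs a <= 2*C /\ Rabs b <= 2*C /\ Rabs c <= 2*C /\ Rabs d <= 2*C.
Proof.
  intro HC.
  pose proof (sum_sqr_entries_le_opnorm2 a b c d) as Hsum.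
  assert (Hn : 0 <= opnorm2 a b c d) by apply sqrt_pos.
  assert (Hsq : forall t, t*t <= 4*(C*C) -> Rabs t <= 2*C).
  { intros t Ht. apply Rabs_le. split; nra. }
  repeat split; apply Hsq; nra.
Qed.

Lemma Rabs_le_bounds (t K : R) : Rabs t <= K -> - K <= t <= K.
Proof.
  intro Ht. pose proof (RRle_abs t). pose proof (RRle_abs (- t)).
  rewrite Rabs_Ropp in *. lra.
Qed.

Lemma quadratic_nonneg (c p q m x : R) :
  0 < c -> c <= p -> c <= q -> Rabs m <= 2*c ->
  0 <= p + m*x + q*(x*x).
Proof.
  intros Hc Hp Hq Hm. apply Rabs_le_bounds in Hm.
  assert (c*(x*x) <= q*(x*x)) by (apply Rmult_le_compat_r; nra).
  destruct (Rle_or_lt 0 x) as [Hx | Hx].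
  - assert (- (2*c) * x <= m * x) by (apply Rmult_le_compat_r; lra).
    assert (0 <= c * ((1 - x) * (1 - x)))
      by (apply Rmult_le_pos; [lra | apply Rle_0_sqr]).
    lra.
  - assert (2*c * x <= m * x) by nra.
    assert (0 <= c * ((1 + x) * (1 + x)))
      by (apply Rmult_le_pos; [lra | apply Rle_0_sqr]).
    lra.
Qed.

Lemma Qnum_sub_mul_Qden (e a b al be ga de x : R) :
  Qnum e a b al be x - x * Qden e a b ga de x =
  e * ((a - b - e*be) + e*(al - de)*x + (a + b + e*ga)*(x*x)).
Proof. unfold Qnum, Qden; ring. Qed.

Lemma le_div_of_pos_num (N D x : R) :
  0 < N -> D <> 0 -> 0 <= N / D -> x * D <= N -> x <= N / D.
Proof.
  intros HN HD Hq Hle.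
  assert (HDpos : 0 < D).
  { destruct (Rtotal_order D 0) as [Hneg | [Hz | Hpos]]; [| contradiction | exact Hpos].
    exfalso. assert (N / D < 0) by (apply Rdiv_pos_neg; assumption). lra. }
  apply (Rmult_le_reg_r D); [exact HDpos |].
  unfold Rdiv. rewrite Rmult_assoc, Rinv_l, Rmult_1_r by lra. exact Hle.
Qed.

Lemma Q_action_ge (e a b al be ga de x c : R) :
  0 < e -> 0 <= x -> 0 < c ->
  c <= a - b - e*be -> c <= a + b + e*ga ->
  0 < 1 + e^2*al -> Rabs (e*(al - de)) <= 2*c ->
  Qden e a b ga de x <> 0 ->
  0 <= Qnum e a b al be x / Qden e a b ga de x ->
  x <= Qnum e a b al be x / Qden e a b ga de x.
Proof.
  intros He Hx Hc Hp Hq Hdiag Hm HD Hy.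
  apply le_div_of_pos_num; [| exact HD | exact Hy |].
  - unfold Qnum. assert (0 <= (1 + e^2*al) * x) by (apply Rmult_le_pos; lra). nra.
  - pose proof (quadratic_nonneg c _ _ (e*(al - de)) x Hc Hp Hq Hm) as Hquad.
    pose proof (Qnum_sub_mul_Qden e a b al be ga de x) as Hid.
    assert (0 <= e * ((a - b - e*be) + e*(al - de)*x + (a + b + e*ga)*(x*x)))
      by (apply Rmult_le_pos; lra).
    lra.
Qed.

Theorem lemma1 (Sigma : Type) (a b : Sigma -> R)
  (alpha beta gamma delta : R -> Sigma -> R) (C1 C3 : R) :
  0 < C1 -> 0 < C3 ->
  (forall s : Sigma, a s - Rabs (b s) >= C1) ->
  (forall (eps : R) (s : Sigma), Rabs eps <= 1 ->
     opnorm2 (alpha eps s) (beta eps s) (gamma eps s) (delta eps s) <= C3) ->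
  exists eps0 : R, 0 < eps0 /\
    forall (eps : R) (s : Sigma) (x : R),
      0 < eps < eps0 -> 0 <= x ->
      Qden eps (a s) (b s) (gamma eps s) (delta eps s) x <> 0 ->
      let y := Qnum eps (a s) (b s) (alpha eps s) (beta eps s) x
               / Qden eps (a s) (b s) (gamma eps s) (delta eps s) x in
      0 <= y -> x <= y.
Proof.
  intros HC1 HC3 Hab Hop.
  set (K := 2 * C3).
  set (r := Rmin C1 1).
  assert (Hr : 0 < r) by (apply Rmin_pos; lra).
  assert (Hr1 : r <= 1) by apply Rmin_r.
  assert (HrC1 : r <= C1) by apply Rmin_l.
  (* [e K <= C1/2] keeps the perturbations of [a -+ b] and the drift term
     below [C1/2]; [e K <= 1/2] keeps [1 + e^2 alpha] positive. *)
  exists (Rmin 1 (r / (2 * K))).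
  split; [apply Rmin_pos; unfold K; [lra | apply Rdiv_lt_0_compat; lra] |].
  intros e s x [He Heps] Hx HD y Hy.
  assert (He1 : e < 1) by (eapply Rlt_le_trans; [exact Heps | apply Rmin_l]).
  assert (HeK : e * K <= r / 2).
  { assert (e <= r / (2 * K))
      by (left; eapply Rlt_le_trans; [exact Heps | apply Rmin_r]).
    replace (r / 2) with (r / (2 * K) * K) by (field; unfold K; lra).
    apply Rmult_le_compat_r; [unfold K; lra | assumption]. }
  destruct (Rabs_entries_le_opnorm2 _ _ _ _ _ (Hop e s ltac:(rewrite Rabs_right; lra)))
    as (Hal & Hbe & Hga & Hde).
  fold K in Hal, Hbe, Hga, Hde.
  apply Rabs_le_bounds in Hal, Hbe, Hga, Hde.
  pose proof (Hab s) as Habs.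
  pose proof (Rabs_le_bounds (b s) _ (Rle_refl _)) as Hb.
  assert (Hminus : C1 / 2 <= a s - b s - e * beta e s) by nra.
  assert (Hplus : C1 / 2 <= a s + b s + e * gamma e s) by nra.
  assert (Hdiag : 0 < 1 + e^2 * alpha e s).
  { assert (- (e * K) <= e * alpha e s) by nra. simpl. nra. }
  assert (Hdrift : Rabs (e * (alpha e s - delta e s)) <= 2 * (C1 / 2))
    by (apply Rabs_le; split; nra).
  refine (Q_action_ge _ _ _ _ _ _ _ _ (C1 / 2) He Hx _ Hminus Hplus Hdiag Hdrift HD Hy).
  lra.
Qed.
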